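(* Let $M\in\Gamma$ be a monitor, $N$ a malicious node, and $P$ an honest node that was previously an inbound peer of $N$. Let $PeeV(P)_i$ be a past execution of $PeeV(P)$ by $M$, and let $\mu=[P,M,r_i]$ be the marker received by $N$ in that execution. If, during a subsequent execution $PeeV(P)_j$, $N$ is not connected to $P$ (i.e. $(P,N)\notin E$) and $N$ sends $\mu$ to $M$, then when $PeeV(P)_j$ ends, $N\notin L_P^M$.
   Context: The network is a directed graph $G=(V,E)$ of nodes; $(X,Y)\in E$ means $X$ has an outbound connection to $Y$. $\Gamma$ is a set of legitimate monitors, each connected to every node. A marker is a triple $[N,M,r]$ (target, monitor, value). $PeeV(N)$, run by monitor $M$: start with empty $L_N^M$; draw a fresh random value $r$ (the values drawn in different executions are distinct); send $[N,M,r]$ to $N$; until a timeout, whenever a marker equal to $[N,M,r]$ is received from a node $Q$, add $Q$ to $L_N^M$; then output $L_N^M$. Honest nodes handle a marker $[N,M,r]$ received from $pfrom$ as follows: if $pfrom=M\in\Gamma$, forward it to all their outbound peers; if $pfrom=N$ and $N$ is an inbound peer, send it to $M$; otherwise drop it. Malicious nodes may deviate arbitrarily. *)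

From mathcomp Require Import all_boot.
Set Implicit Arguments. Unset Strict Implicit. Unset Printing Implicit Defensive.

(* A marker [N, M, r] : (target, monitor, value). *)
Definition marker (Node Val : eqType) : eqType := (Node * Node * Val)%type.

(* One execution PeeV(target) run by [monitor] with fresh value [value].
   [graph] is the network E (outbound connections) during that execution,
   [recv] is the list of (sender, marker) messages received by the monitor
   before the timeout, in arrival order. *)
Record execution (Node Val : eqType) := Execution {
  ex_target  : Node;
  ex_monitor : Node;
  ex_value   : Val;
  ex_graph   : rel Node;
  ex_recv    : seq (Node * marker Node Val)%type
}.

Definition ex_marker (Node Val : eqType) (e : execution Node Val) : marker Node Val :=
  (ex_target e, ex_monitor e, ex_value e).

Definition peev_output (Node Val : eqType) (e : execution Node Val) : seq Node :=
  [seq q.1 | q <- ex_recv e & q.2 == ex_marker e].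

(* N can only replay the marker of PeeV(P)_i, whose value r_i differs from
   the fresh value r_j of PeeV(P)_j; so nothing N sends to M equals the marker
   [P, M, r_j], and M never adds N to L_P^M. *)
From mathcomp Require Import all_boot.

Lemma peev_outputP (Node Val : eqType) (e : execution Node Val) (q : Node) :
  reflect ((q, ex_marker e) \in ex_recv e) (q \in peev_output e).
Proof.
apply: (iffP mapP) => [[[q' m]] /= | Hin].
  by rewrite mem_filter /= => /andP[/eqP -> Hin] ->.
by exists (q, ex_marker e); rewrite // mem_filter /= eqxx.
Qed.

Lemma notin_peev_output (Node Val : eqType) (e : execution Node Val) (q : Node) :
  (forall m, (q, m) \in ex_recv e -> m != ex_marker e) -> q \notin peev_output e.
Proof. by move=> Hstale; apply/peev_outputP => /Hstale; rewrite eqxx. Qed.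

Lemma ex_marker_fresh (Node Val : eqType) (exec : nat -> execution Node Val) :
    (forall a b, a <> b -> ex_value (exec a) <> ex_value (exec b)) ->
  forall a b, a != b -> ex_marker (exec a) != ex_marker (exec b).
Proof. by move=> fresh a b /eqP neq_ab; apply/eqP => -[_ _ /(fresh _ _ neq_ab)]. Qed.

Theorem lemma3 (Node Val : eqType) (Gamma : pred Node) (honest : pred Node)
    (exec : nat -> execution Node Val)
    (* values drawn in different executions are distinct *)
    (fresh : forall a b, a <> b -> ex_value (exec a) <> ex_value (exec b))
    (M N P : Node) (i j : nat)
    (hM : M \in Gamma) (hN : ~~ honest N) (hP : honest P)
    (* PeeV(P)_i and PeeV(P)_j are executions of PeeV(P) by M, j after i *)
    (hij : i < j)
    (hti : ex_target (exec i) = P) (hmi : ex_monitor (exec i) = M)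
    (htj : ex_target (exec j) = P) (hmj : ex_monitor (exec j) = M)
    (* P was an inbound peer of N at execution i *)
    (hPNi : ex_graph (exec i) P N)
    (mu : marker Node Val)
    (* mu is the marker received by N in execution i *)
    (hmu : mu = ex_marker (exec i))
    (* during execution j, N is not connected to P *)
    (hPNj : ~~ ex_graph (exec j) P N)
    (* during execution j, N sends mu to M (and that is what N sends to M) *)
    (hsend : (N, mu) \in ex_recv (exec j))
    (honly : forall m, (N, m) \in ex_recv (exec j) -> m = mu) :
  N \notin peev_output (exec j).
Proof.
apply: notin_peev_output => m /honly ->; rewrite hmu.
by apply: ex_marker_fresh; rewrite // ltn_eqF.
Qed.
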